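(* Let $p \geq 1$, let $\boldsymbol \Omega$ be a $p\times p$ positive definite matrix and let $\boldsymbol \Psi$ be a $p\times p$ non-diagonal positive definite matrix with all diagonal entries equal to $1$. Let $\boldsymbol \beta$ have the structured product normal (SPN) prior with parameters $\boldsymbol \Omega, \boldsymbol \Psi$, with marginal density $$p(\boldsymbol b \mid \boldsymbol \Psi, \boldsymbol \Omega) = \int_{\mathbb{R}^p} \Big(\prod_{i=1}^p \frac{1}{|s_i|}\Big)\, \phi_{\boldsymbol \Omega}(\boldsymbol b / \boldsymbol s)\, \phi_{\boldsymbol \Psi}(\boldsymbol s)\, d\boldsymbol s \in [0,+\infty],$$ where $\phi_{\boldsymbol A}$ denotes the $\text{normal}(\boldsymbol 0, \boldsymbol A)$ density and $\boldsymbol b/\boldsymbol s$ is elementwise division. If $\boldsymbol b \in \mathbb{R}^p$ satisfies $b_j = 0$ for some $j \in \{1,\dots,p\}$, then $p(\boldsymbol b \mid \boldsymbol \Psi, \boldsymbol \Omega) = +\infty$.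
   Context: The SPN prior is the distribution of $\boldsymbol \beta = \boldsymbol s \circ \boldsymbol z$ (elementwise product), where $\boldsymbol z \sim \text{normal}(\boldsymbol 0, \boldsymbol \Omega)$ and $\boldsymbol s \sim \text{normal}(\boldsymbol 0, \boldsymbol \Psi)$ are independent; the displayed integral is the resulting marginal (joint) prior density of $\boldsymbol \beta$ at $\boldsymbol b$, allowed to take the value $+\infty$. *)

From HB Require Import structures.
From mathcomp Require Import all_boot all_order all_algebra.
From mathcomp Require Import all_classical all_reals all_analysis.
Set Implicit Arguments. Unset Strict Implicit. Unset Printing Implicit Defensive.
Import Order.TTheory GRing.Theory Num.Theory.
Local Open Scope ring_scope.

Section Defs.
Variable R : realType.

Definition posdef (p : nat) (A : 'M[R]_p) : Prop :=
  A^T = A /\ forall x : 'rV[R]_p, x != 0 -> 0 < (x *m A *m x^T) 0 0.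

Definition normal_pdf (p : nat) (A : 'M[R]_p) (x : 'rV[R]_p) : R :=
  (Num.sqrt ((2 * pi) ^+ p * \det A))^-1 *
  expR (- (x *m invmx A *m x^T) 0 0 / 2).

(* Lebesgue integral over R^n of a function of n real coordinates, defined as
   the iterated integral (coordinate 0 outermost).  For the nonnegative
   measurable integrands considered here this coincides (Tonelli) with the
   integral against n-dimensional Lebesgue measure. *)
Fixpoint int_Rn (n : nat) : (('I_n -> R) -> \bar R) -> \bar R :=
  match n with
  | 0 => fun f => f (fun i => 0)
  | n'.+1 => fun f =>
      (\int[@lebesgue_measure R]_(x in [set: R])
         int_Rn (fun t : 'I_n' -> R =>
            f (fun i : 'I_n'.+1 =>
                 if unlift ord0 i is Some j then t j else x)))%E
  end.

Definition int_rV (p : nat) (f : 'rV[R]_p -> \bar R) : \bar R :=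
  int_Rn (fun s : 'I_p -> R => f (\row_i s i)).

(* marginal density of the SPN prior beta = s o z, z ~ N(0,Omega), s ~ N(0,Psi):
   p(b | Psi, Omega) = int (prod_i 1/|s_i|) phi_Omega(b/s) phi_Psi(s) ds *)
Definition spn_density (p : nat) (Psi Omega : 'M[R]_p) (b : 'rV[R]_p) : \bar R :=
  int_rV (fun s : 'rV[R]_p =>
    ((\prod_(i < p) `|s 0 i|^-1) *
     normal_pdf Omega (\row_i (b 0 i / s 0 i)) *
     normal_pdf Psi s)%:E).

End Defs.

(* Pick [j] with [b 0 j = 0] and look at the box where [s 0 j] ranges over
   [[e, 1]] and every other coordinate over [[1, 2]].  On it [s] and [b / s]
   stay bounded (the small coordinate [s 0 j] only divides [b 0 j = 0]), so
   both Gaussian factors are bounded below by constants, while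
   [prod_i 1 / |s 0 i|] integrates over the box to [- ln e * (ln 2) ^ (p - 1)],
   which is unbounded as [e] tends to [0]. *)

From Pilot Require Import Defs.
From HB Require Import structures.
From mathcomp Require Import all_boot all_order all_algebra.
From mathcomp Require Import all_classical all_reals all_analysis.
From mathcomp Require Import ring.
From mathcomp Require polyrcf.
Set Implicit Arguments.
Unset Strict Implicit.
Unset Printing Implicit Defensive.
Import Order.TTheory GRing.Theory Num.Theory numFieldNormedType.Exports.
Local Open Scope ring_scope.
Local Open Scope classical_set_scope.

(* If [\det A <= 0], the monic polynomial [char_poly (- A)], whose value at [0]
   is [\det A], has a root [x >= 0]; an eigenvector [v] of [- A] for [x] then
   gives [v A v^T = - x |v|^2 <= 0]. *)
Lemma posdef_det_gt0 (R : realType) (p : nat) (A : 'M[R]_p) :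
  posdef A -> 0 < \det A.
Proof.
move=> [_ pdA]; set Q := char_poly (- A).
have lcQ : lead_coef Q = 1 by apply/eqP; exact: char_poly_monic.
have Q0 : Q.[0] = \det A.
  rewrite horner_coef0 char_poly_det -(scaleN1r A) detZ mulrA -exprMn.
  by rewrite mulrNN mulr1 expr1n mul1r.
rewrite ltNge; apply/negP => detA_le0.
have [n Qn] : exists n, forall x, n <= x -> lead_coef Q <= Q.[x].
  by apply: polyrcf.poly_pinfty_gt_lc; rewrite lcQ ltr01.
have [x /andP[x_ge0 _] rootQx] : exists2 x, 0 <= x <= Num.max n 0 & root Q x.
  apply: (@Num.poly_ivt R); first by rewrite le_max lexx orbT.
  rewrite Q0 detA_le0 /=; apply: le_trans (Qn _ _); first by rewrite lcQ ler01.
  by rewrite le_max lexx.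
have /eigenvalueP[v Av v_neq0] : eigenvalue (- A) x.
  by rewrite eigenvalue_root_char.
have := pdA v v_neq0.
rewrite -[A]opprK mulmxN Av mulNmx -scalemxAl mxE mxE ltNge oppr_le0.
rewrite mulr_ge0 // mxE; apply: sumr_ge0 => i _; rewrite !mxE -expr2.
exact: sqr_ge0.
Qed.

Section IteratedIntegral.
Variable R : realType.
Local Notation mu := (@lebesgue_measure R).
Local Open Scope ereal_scope.

(* Unlike [ge0_le_integral], no measurability is needed: the integral of a
   nonnegative function is a supremum over the simple functions below it. *)
Lemma ge0_le_integralT (f g : R -> \bar R) :
  (forall x, 0 <= f x) -> (forall x, f x <= g x) ->
  \int[mu]_(x in [set: R]) f x <= \int[mu]_(x in [set: R]) g x.
Proof.
move=> f_ge0 le_fg.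
have g_ge0 x : 0 <= g x by apply: le_trans (le_fg x).
rewrite !ge0_integralTE //; apply: ereal_sup_le.
move=> _ [h le_hf <-]; exists h => //= x.
exact: le_trans (le_hf x) (le_fg x).
Qed.

Lemma int_Rn_ge0 n (f : ('I_n -> R) -> \bar R) :
  (forall t, 0 <= f t) -> 0 <= int_Rn f.
Proof.
elim: n f => [|n IH] f f_ge0 /=; first exact: f_ge0.
by apply: integral_ge0 => x _; apply: IH.
Qed.

Lemma le_int_Rn n (f g : ('I_n -> R) -> \bar R) :
  (forall t, 0 <= f t) -> (forall t, f t <= g t) -> int_Rn f <= int_Rn g.
Proof.
elim: n f g => [|n IH] f g f_ge0 le_fg /=; first exact: le_fg.
apply: ge0_le_integralT => x; first exact: int_Rn_ge0.
exact: IH.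
Qed.

Lemma int_Rn_prod n (k : R) (g : 'I_n -> R -> R) (G : 'I_n -> R) :
  (0 <= k)%R -> (forall i x, 0 <= g i x)%R ->
  (forall i, measurable_fun [set: R] (g i)) ->
  (forall i, \int[mu]_(x in [set: R]) (g i x)%:E = (G i)%:E) ->
  int_Rn (fun t => (k * \prod_i g i (t i))%:E) = (k * \prod_i G i)%:E.
Proof.
elim: n k g G => [|n IH] k g G k_ge0 g_ge0 g_meas intg /=.
  by rewrite !big_ord0.
have G_ge0 i : (0 <= G i)%R.
  by rewrite -lee_fin -intg; apply: integral_ge0 => x _; rewrite lee_fin.
have inner x : int_Rn (fun t : 'I_n -> R => (k * \prod_(i < n.+1)
      g i (if unlift ord0 i is Some j then t j else x))%:E) =
    ((k * \prod_(i < n) G (lift ord0 i)) * g ord0 x)%:E.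
  rewrite mulrAC -(IH _ (fun i => g (lift ord0 i))) ?mulr_ge0 //.
  congr int_Rn; apply: funext => t; congr (_%:E).
  rewrite big_ord_recl unlift_none mulrA; congr (_ * _)%R.
  by apply: eq_bigr => i _; rewrite liftK.
under eq_integral do rewrite inner EFinM.
rewrite ge0_integralZl_EFin //.
- by rewrite intg -EFinM big_ord_recl; congr EFin; ring.
- by move=> x _; rewrite lee_fin.
- by apply/measurable_realfun.measurable_EFinP; apply: g_meas.
- by rewrite mulr_ge0 // prodr_ge0.
Qed.

End IteratedIntegral.

Section InvOn.
Variables (R : realType) (a c : R).
Hypothesis a_gt0 : 0 < a.

Definition inv_on : R -> R := (fun x => x^-1) \_ `[a, c].

Lemma inv_onE x : inv_on x = if a <= x <= c then x^-1 else 0.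
Proof. by rewrite /inv_on /patch mem_setE in_itv. Qed.

Lemma inv_on_ge0 x : 0 <= inv_on x.
Proof.
rewrite inv_onE; case: ifP => // /andP[le_ax _].
by rewrite invr_ge0 (le_trans (ltW a_gt0)).
Qed.

Lemma inv_on_le_invr_norm x : inv_on x <= `|x|^-1.
Proof.
rewrite inv_onE; case: ifP => [/andP[le_ax _]|_]; last by rewrite invr_ge0.
by rewrite ger0_norm // (le_trans (ltW a_gt0)).
Qed.

Lemma inv_on_neq0 x : inv_on x != 0 -> a <= x <= c.
Proof. by rewrite inv_onE; case: ifP; rewrite ?eqxx. Qed.

Lemma continuous_within_invr :
  {within `[a, c], continuous (fun x : R => x^-1)}.
Proof.
apply: continuous_in_subspaceT => x.
rewrite inE /= in_itv /= => /andP[le_ax _].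
by apply: inv_continuous; rewrite gt_eqF // (lt_le_trans a_gt0).
Qed.

Lemma measurable_inv_on : measurable_fun [set: R] inv_on.
Proof.
apply/(measurable_restrictT _ _).1 => //.
exact: measurable_realfun.subspace_continuous_measurable_fun
         continuous_within_invr.
Qed.

Lemma integral_inv_on : a < c ->
  (\int[@lebesgue_measure R]_(x in [set: R]) (inv_on x)%:E =
   (ln c - ln a)%:E)%E.
Proof.
move=> lt_ac.
have -> : (\int[@lebesgue_measure R]_(x in [set: R]) (inv_on x)%:E =
           \int[@lebesgue_measure R]_(x in `[a, c]) (x^-1)%:E)%E.
  rewrite [RHS]integral_mkcond; apply: eq_integral => x _.
  by rewrite /inv_on /patch; case: ifP.
rewrite (@continuous_FTC2 _ _ (@ln R) _ _ lt_ac continuous_within_invr).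
rewrite ?EFinB //.
- split.
  + move=> x; rewrite in_itv /= => /andP[lt_ax _].
    have ln_x := is_derive1_ln (lt_trans a_gt0 lt_ax); exact: ex_derive.
  + exact/cvg_at_right_filter/continuous_ln.
  + exact/cvg_at_left_filter/continuous_ln/(lt_trans a_gt0).
- move=> x; rewrite in_itv /= => /andP[lt_ax _].
  have ln_x := is_derive1_ln (lt_trans a_gt0 lt_ax).
  by rewrite derive1E; apply: derive_val.
Qed.

End InvOn.

Section GaussianLowerBound.
Variables (R : realType) (p : nat).
Implicit Types (A M : 'M[R]_p) (x : 'rV[R]_p) (B : R).

Definition mx_abs_sum M : R := \sum_i \sum_l `|M i l|.

Lemma quad_form_le M x B : 0 <= B -> (forall i, `|x 0 i| <= B) ->
  (x *m M *m x^T) 0 0 <= B ^+ 2 * mx_abs_sum M.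
Proof.
move=> B_ge0 xB; apply: le_trans (ler_norm _) _.
rewrite !mxE; apply: le_trans (ler_norm_sum _ _ _) _.
rewrite /mx_abs_sum exchange_big mulr_sumr; apply: ler_sum => l _.
rewrite !mxE normrM.
apply: le_trans
  (ler_pM (normr_ge0 _) (normr_ge0 _) (ler_norm_sum _ _ _) (xB l)) _.
rewrite mulr_suml mulr_sumr; apply: ler_sum => i _; rewrite normrM expr2.
rewrite [leLHS]mulrAC; apply: ler_wpM2r => //.
by apply: ler_pM; rewrite ?normr_ge0.
Qed.

Definition normal_pdf_floor A B : R :=
  (Num.sqrt ((2 * pi) ^+ p * \det A))^-1 *
  expR (- (B ^+ 2 * mx_abs_sum (invmx A)) / 2).

Lemma normal_pdf_floor_gt0 A B : 0 < \det A -> 0 < normal_pdf_floor A B.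
Proof.
move=> detA_gt0; rewrite mulr_gt0 ?expR_gt0 // invr_gt0 sqrtr_gt0.
by rewrite mulr_gt0 // exprn_gt0 // mulr_gt0 // pi_gt0.
Qed.

Lemma normal_pdf_ge0 A x : 0 <= Defs.normal_pdf A x.
Proof. by rewrite mulr_ge0 ?invr_ge0 ?sqrtr_ge0 ?expR_ge0. Qed.

Lemma normal_pdf_ge_floor A x B : 0 <= B -> (forall i, `|x 0 i| <= B) ->
  normal_pdf_floor A B <= Defs.normal_pdf A x.
Proof.
move=> B_ge0 xB; rewrite ler_wpM2l ?invr_ge0 ?sqrtr_ge0 // ler_expR.
by rewrite !mulNr lerN2 ler_pM2r // quad_form_le.
Qed.

End GaussianLowerBound.

Section ZeroCoordinate.
Variables (R : realType) (p : nat) (Omega Psi : 'M[R]_p).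
Variables (b : 'rV[R]_p) (j : 'I_p).
Hypotheses (detO_gt0 : 0 < \det Omega) (detP_gt0 : 0 < \det Psi).
Hypothesis bj0 : b 0 j = 0.

Let B : R := 2 + \sum_i `|b 0 i|.
Let k : R := normal_pdf_floor Omega B * normal_pdf_floor Psi B.
Let L : R := \prod_(i < p | i != j) ln 2.

Let box_lo (e : R) (i : 'I_p) : R := if i == j then e else 1.
Let box_hi (i : 'I_p) : R := if i == j then 1 else 2.

Lemma spn_integrand_ge e (s : 'rV[R]_p) : 0 < e ->
  k * \prod_i inv_on (box_lo e i) (box_hi i) (s 0 i) <=
  (\prod_i `|s 0 i|^-1) * Defs.normal_pdf Omega (\row_i (b 0 i / s 0 i)) *
  Defs.normal_pdf Psi s.
Proof.
move=> e_gt0; set w := \prod_i _.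
have lo_gt0 i : 0 < box_lo e i by rewrite /box_lo; case: ifP.
have w_ge0 : 0 <= w by apply: prodr_ge0 => i _; apply: inv_on_ge0.
have [w0|/prodf_neq0 w_neq0] := eqVneq w 0.
  rewrite w0 mulr0 !mulr_ge0 ?normal_pdf_ge0 //.
  by apply: prodr_ge0 => i _; rewrite invr_ge0.
have s_box i : box_lo e i <= s 0 i <= box_hi i by apply/inv_on_neq0/w_neq0.
have B_ge2 : 2 <= B by rewrite lerDl sumr_ge0.
have sB i : `|s 0 i| <= B.
  have /andP[lo_s s_hi] := s_box i.
  rewrite ger0_norm ?(le_trans (ltW (lo_gt0 i))) //.
  apply: le_trans s_hi (le_trans _ B_ge2).
  by rewrite /box_hi; case: ifP => _; rewrite ?ler1n.
have bsB i : `|(\row_i (b 0 i / s 0 i)) 0 i| <= B.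
  rewrite mxE; have [->|neq_ij] := eqVneq i j.
    by rewrite bj0 mul0r normr0 (le_trans _ B_ge2).
  have /andP[+ _] := s_box i; rewrite /box_lo (negbTE neq_ij) => s_ge1.
  have s_gt0 : 0 < s 0 i by apply: lt_le_trans s_ge1.
  rewrite normrM normfV (gtr0_norm s_gt0).
  apply: (@le_trans _ _ `|b 0 i|).
    by rewrite ler_pdivrMr // ler_peMr.
  apply: le_trans (_ : \sum_i `|b 0 i| <= B); last by rewrite lerDr.
  by rewrite (bigD1 i) //= lerDl sumr_ge0.
have w_le : w <= \prod_i `|s 0 i|^-1.
  apply: ler_prod => i _.
  by rewrite (inv_on_ge0 _ (lo_gt0 i)) (inv_on_le_invr_norm _ (lo_gt0 i)).
have B_ge0 : 0 <= B by apply: le_trans B_ge2.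
have fO_ge0 := ltW (normal_pdf_floor_gt0 B detO_gt0).
have fP_ge0 := ltW (normal_pdf_floor_gt0 B detP_gt0).
rewrite /k mulrC mulrA; apply: ler_pM; rewrite ?mulr_ge0 //.
  by apply: ler_pM => //; apply: normal_pdf_ge_floor.
by apply: normal_pdf_ge_floor.
Qed.

Lemma spn_density_ge y :
  0 < y -> ((k * y * L)%:E <= spn_density Psi Omega b)%E.
Proof.
move=> y_gt0; pose e := expR (- y).
have e_gt0 : 0 < e by apply: expR_gt0.
have lo_gt0 i : 0 < box_lo e i by rewrite /box_lo; case: ifP.
have int_box i : (\int[@lebesgue_measure R]_(x in [set: R])
    (inv_on (box_lo e i) (box_hi i) x)%:E = (if i == j then y else ln 2)%:E)%E.
  rewrite integral_inv_on //; rewrite /box_lo /box_hi; case: ifP => _.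
  - by rewrite ln1 expRK sub0r opprK.
  - by rewrite ln1 subr0.
  - by rewrite expR_lt1 oppr_lt0.
  - by rewrite ltr1n.
have k_ge0 : 0 <= k by rewrite mulr_ge0 // ltW ?normal_pdf_floor_gt0.
have -> : k * y * L = k * \prod_i (if i == j then y else ln 2).
  rewrite (bigD1 j) //= eqxx mulrA; congr (_ * _).
  by apply: eq_bigr => i /negbTE ->.
rewrite -(int_Rn_prod k_ge0 _ _ int_box); last first.
- by move=> i; apply: measurable_inv_on.
- by move=> i x; apply: inv_on_ge0.
apply: le_int_Rn => t.
  by rewrite lee_fin mulr_ge0 // prodr_ge0 // => i _; apply: inv_on_ge0.
have := spn_integrand_ge (\row_i t i) e_gt0.
by under eq_bigr do rewrite mxE.
Qed.

Lemma spn_density_eq_pinfty : spn_density Psi Omega b = +oo%E.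
Proof.
have k_gt0 : 0 < k by rewrite mulr_gt0 ?normal_pdf_floor_gt0.
have L_gt0 : 0 < L by apply: prodr_gt0 => i _; rewrite ln_gt0 // ltr1n.
have kL_gt0 : 0 < k * L by rewrite mulr_gt0.
apply/eqyP => A A_gt0.
have y_gt0 : 0 < A / (k * L) by rewrite divr_gt0.
apply: le_trans (spn_density_ge y_gt0).
by rewrite lee_fin mulrAC mulrC divfK ?gt_eqF.
Qed.

End ZeroCoordinate.

Theorem proposition2p1 (R : realType) (p : nat) (Omega Psi : 'M[R]_p) :
  (0 < p)%N ->
  posdef Omega ->
  posdef Psi ->
  (forall i, Psi i i = 1) ->
  (exists i j : 'I_p, i != j /\ Psi i j != 0) ->
  forall b : 'rV[R]_p, (exists j : 'I_p, b 0 j = 0) ->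
  spn_density Psi Omega b = +oo%E.
Proof.
move=> _ /posdef_det_gt0 detO_gt0 /posdef_det_gt0 detP_gt0 _ _ b [j bj0].
exact: spn_density_eq_pinfty detO_gt0 detP_gt0 bj0.
Qed.
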